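(* Let $n\ge 2$ and let $(G(k))_{k\in\mathbb{N}}$ be a sequence of digraphs on $\mathcal{V}=\{1,\dots,n\}$ with knowledge sets evolving by the flooding update described in the context. Let $\psi(k)=n$ for $k\le\lceil n/2\rceil-1$ and $\psi(k)=n-k$ for $k\ge\lceil n/2\rceil$. If for every $k\in\{0,1,\dots,n-2\}$ the digraph $G(k)$ contains $\psi(k)(k)$, then for every node $i\in\mathcal{V}$ we have $|\mathcal{K}_i(n)|=n$, and $n$ is the smallest nonnegative integer $k$ with $|\mathcal{K}_i(k)|\le k$; hence every node can determine the network size $n$ from the cardinalities of its own knowledge sets by time $k=n$.
   Context: Network: $\mathcal{V}=\{1,\dots,n\}$; node $i$ holds initial data $d_i\in\mathbb{R}$, pairwise distinct. At discrete times $k\in\mathbb{N}$ communication follows digraph $G(k)=(\mathcal{V},\mathcal{E}(k))$; node $i$ sends to $j$ at time $k$ iff $(i,j)\in\mathcal{E}(k)$. Knowledge sets: $\mathcal{K}_i(0)=\{d_i\}$ and $\mathcal{K}_j(k+1)=\mathcal{K}_j(k)\cup\bigcup_{i:(i,j)\in\mathcal{E}(k)}\mathcal{K}_i(k)$. An input-cord to node $i$ at time $k$ is an ordered list $(\mathcal{I}^i_1,\dots,\mathcal{I}^i_m)$ of pairwise distinct nodes of $\mathcal{V}\setminus\{i\}$ with $(\mathcal{I}^i_j,\mathcal{I}^i_{j+1})\in\mathcal{E}(k)$ for $j=1,\dots,m-1$ and $(\mathcal{I}^i_m,i)\in\mathcal{E}(k)$; its cardinality is $m$. It is closed if moreover $(i,\mathcal{I}^i_1)\in\mathcal{E}(k)$.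 For an integer $\chi$, node $i$ is contained in a $\chi(k)$-cycle if it has at time $k$ a closed input-cord of cardinality greater than $\chi-2$; $G(k)$ contains $\chi(k)$ if every node is contained in a $\chi(k)$-cycle. *)

From HB Require Import structures.
From mathcomp Require Import all_boot all_order all_algebra.
From mathcomp Require Import finmap.
Set Implicit Arguments. Unset Strict Implicit. Unset Printing Implicit Defensive.
Local Open Scope fset_scope.

(* Nodes are 'I_n; the time-varying digraph is E : nat -> rel 'I_n,
   (E k i j) meaning (i,j) \in E(k), i.e. i sends to j at time k. *)

Fixpoint knowledge (n : nat) (T : choiceType) (d : 'I_n -> T)
    (E : nat -> rel 'I_n) (k : nat) (j : 'I_n) : {fset T} :=
  match k with
  | 0 => [fset d j]
  | k'.+1 => knowledge d E k' j
             `|` \bigcup_(i <- enum 'I_n | E k' i j) knowledge d E k' i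
  end.

Definition input_cord (n : nat) (e : rel 'I_n) (i : 'I_n) (s : seq 'I_n) : bool :=
  match s with
  | [::] => false
  | x :: p => [&& uniq s, i \notin s, path e x p & e (last x p) i]
  end.

Definition closed_input_cord (n : nat) (e : rel 'I_n) (i : 'I_n) (s : seq 'I_n) : bool :=
  input_cord e i s && (if s is x :: _ then e i x else false).

Definition in_chi_cycle (n : nat) (e : rel 'I_n) (chi : int) (i : 'I_n) : Prop :=
  exists s, closed_input_cord e i s /\ (chi - 2 < Posz (size s))%R.

Definition contains_chi (n : nat) (e : rel 'I_n) (chi : int) : Prop :=
  forall i, in_chi_cycle e chi i.

Definition psi (n k : nat) : int :=
  if (k < uphalf n)%N then Posz n else (Posz n - Posz k)%R.

From HB Require Import structures.
From mathcomp Require Import all_boot all_order all_algebra.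
From mathcomp Require Import finmap.
From mathcomp Require Import zify.

Set Implicit Arguments. Unset Strict Implicit. Unset Printing Implicit Defensive.

(* Let [sources k j] be the set of nodes whose datum node [j] knows at time [k].
   For a nonempty set [S] of nodes, the sources of [S] at time [k] number at
   least [k + #|S|] as long as [#|S| + k <= n]: at each step either some node
   outside [S] sends into [S], and we enlarge [S], or [S] is closed under
   predecessors at time [k]; in the latter case a closed input-cord of any node
   of [S] lies inside [S], so [#|S| >= psi(k) >= n - k], which is too large.
   Taking [S = {i}] gives [#|K_i(k)| > k] for [k < n] and [#|K_i(n)| = n]. *)

Section Sources.

Variables (n : nat) (E : nat -> rel 'I_n).

Fixpoint sources (k : nat) (j : 'I_n) : {set 'I_n} :=
  match k with
  | 0 => [set j]
  | k'.+1 => sources k' j :|: \bigcup_(i | E k' i j) sources k' i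
  end.

Lemma sources_subS k j : sources k j \subset sources k.+1 j.
Proof. exact: subsetUl. Qed.

Lemma sources_sub_pred k p j : E k p j -> sources k p \subset sources k.+1 j.
Proof. by move=> Epj; rewrite /= subsetU // orbC (bigcup_sup p). Qed.

Variables (T : choiceType) (d : 'I_n -> T).

Lemma knowledgeE k j : knowledge d E k j = [fset d y | y in sources k j]%fset.
Proof.
elim: k j => [|k IH] j /=.
  by apply/fsetP => x; rewrite in_fset1; apply/eqP/imfsetP => [->|[y /set1P -> ->]];
    [exists j; rewrite ?inE|].
apply/fsetP => x; rewrite in_fsetU IH; apply/idP/imfsetP.
- case/orP => [/imfsetP [y Hy ->]|/bigfcupP [i /andP [_ Eij]]].
    by exists y; rewrite //= inE Hy.
  rewrite IH => /imfsetP [y Hy ->]; exists y => //=.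
  by rewrite inE; apply/orP; right; apply/bigcupP; exists i.
- move=> [y /=]; rewrite inE => /orP [Hy ->|/bigcupP [i Eij Hy] ->].
    by rewrite in_imfset.
  apply/orP; right; apply/bigfcupP; exists i; first by rewrite mem_enum.
  by rewrite IH in_imfset.
Qed.

Lemma card_knowledge k j : injective d -> #|` knowledge d E k j| = #|sources k j|.
Proof. by move=> d_inj; rewrite knowledgeE card_imfset //= cardE. Qed.

End Sources.

Definition pred_closed (T : finType) (e : rel T) (S : {set T}) : Prop :=
  forall a b, e a b -> b \in S -> a \in S.

Lemma path_pred_closed (T : finType) (e : rel T) (S : {set T}) x p :
  pred_closed e S -> path e x p -> last x p \in S -> {subset x :: p <= S}.
Proof.
move=> clS; elim: p x => [|y p IH] x /=; first by move=> _ xS z; rewrite inE => /eqP ->.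
case/andP=> exy pyp /(IH y pyp) sub z; rewrite in_cons => /predU1P [->|/sub //].
exact: clS exy (sub y (mem_head _ _)).
Qed.

Lemma input_cord_pred_closed_size (n : nat) (e : rel 'I_n) (S : {set 'I_n}) i s :
  pred_closed e S -> i \in S -> input_cord e i s -> (size s < #|S|)%N.
Proof.
case: s => [|x p] // clS iS /and4P [uniq_s i_notin_s path_s e_last].
have sub := path_pred_closed clS path_s (clS _ _ e_last iS).
have uniq_is : uniq (i :: x :: p) by rewrite /= i_notin_s.
change (size (i :: x :: p) <= #|S|)%N; rewrite -(card_uniqP uniq_is).
by apply/subset_leq_card/subsetP => z; rewrite in_cons => /predU1P [->|/sub].
Qed.

Lemma in_chi_cycle_pred_closed_card (n : nat) (e : rel 'I_n) (S : {set 'I_n}) chi i :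
  pred_closed e S -> i \in S -> in_chi_cycle e chi i -> (chi <= #|S|%:Z)%R.
Proof.
move=> clS iS [s [/andP [cord_s _] chi_lt]].
have := input_cord_pred_closed_size clS iS cord_s; lia.
Qed.

Lemma contains_chi_le (n : nat) (e : rel 'I_n) (chi chi' : int) :
  (chi' <= chi)%R -> contains_chi e chi -> contains_chi e chi'.
Proof. by move=> le_chi hchi i; have [s [cs lt]] := hchi i; exists s; split=> //; lia. Qed.

Lemma psi_ge (n k : nat) : (k <= n)%N -> ((n - k)%:Z <= psi n k)%R.
Proof. by rewrite /psi; case: ifP => _; lia. Qed.

Section Growth.

Variables (n : nat) (E : nat -> rel 'I_n).
Hypothesis hE : forall k, (k <= n - 2)%N -> contains_chi (E k) (n - k)%:Z.

Lemma exists_pred_outside k (S : {set 'I_n}) :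
  (0 < #|S|)%N -> (#|S| + k.+1 <= n)%N ->
  exists p j, [/\ p \notin S, j \in S & E k p j].
Proof.
move=> S_gt0 S_small; have [j jS] : exists j, j \in S by apply/set0Pn; rewrite -card_gt0.
case: (pickP [pred pq : 'I_n * 'I_n | [&& pq.1 \notin S, pq.2 \in S & E k pq.1 pq.2]]).
  by move=> [p q] /and3P [pS qS Epq]; exists p, q.
move=> no_pred; have clS : pred_closed (E k) S.
  by move=> a b Eab bS; apply: contraT => aS; have := no_pred (a, b); rewrite /= aS bS Eab.
have le_k : (k <= n - 2)%N by lia.
have := in_chi_cycle_pred_closed_card clS jS (hE le_k j); lia.
Qed.

Lemma card_bigcup_sources k (S : {set 'I_n}) :
  (0 < #|S|)%N -> (#|S| + k <= n)%N ->
  (k + #|S| <= #|\bigcup_(j in S) sources E k j|)%N.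
Proof.
elim: k S => [|k IH] S S_gt0 S_small.
  by apply: subset_leq_card; apply/subsetP => j jS; apply/bigcupP; exists j; rewrite ?inE.
have [p [j [pS jS Epj]]] := exists_pred_outside S_gt0 S_small.
have card_pS : #|p |: S| = #|S|.+1 by rewrite cardsU1 pS.
have IHpS : (k + #|S|.+1 <= #|\bigcup_(q in p |: S) sources E k q|)%N.
  by rewrite -card_pS; apply: IH; rewrite card_pS //; lia.
rewrite addSn -addnS; apply: (leq_trans IHpS).
apply/subset_leq_card/bigcupsP => q; rewrite in_setU1 => /predU1P [->|qS].
  exact: subset_trans (sources_sub_pred Epj) (bigcup_sup j jS).
exact: subset_trans (sources_subS E k q) (bigcup_sup q qS).
Qed.

Lemma card_sources_gt k i : (k < n)%N -> (k < #|sources E k i|)%N.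
Proof.
move=> lt_kn; have := @card_bigcup_sources k [set i].
by rewrite cards1 big_set1 addn1; apply; lia.
Qed.

Lemma card_sources_n i : (0 < n)%N -> #|sources E n i| = n.
Proof.
move=> n_gt0; apply/eqP; rewrite eqn_leq -[X in (_ <= X)%N]card_ord max_card /=.
have sub := sources_subS E n.-1 i; rewrite prednK // in sub.
apply: leq_trans (subset_leq_card sub).
by rewrite -[X in (X <= _)%N]prednK //; apply: card_sources_gt; rewrite prednK.
Qed.

End Growth.

Theorem corollary1 (n : nat) (T : choiceType) (d : 'I_n -> T)
    (E : nat -> rel 'I_n) :
  (2 <= n)%N ->
  injective d ->
  (forall k : nat, (k <= n - 2)%N -> contains_chi (E k) (psi n k)) ->
  forall i : 'I_n,
    #|` knowledge d E n i| = n /\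
    (#|` knowledge d E n i| <= n)%N /\
    (forall k : nat, (#|` knowledge d E k i| <= k)%N -> (n <= k)%N).
Proof.
move=> n_ge2 d_inj hpsi i.
have hE k : (k <= n - 2)%N -> contains_chi (E k) (n - k)%:Z.
  by move=> le_k; apply: contains_chi_le (hpsi k le_k); apply: psi_ge; lia.
have card_n : #|` knowledge d E n i| = n.
  by rewrite card_knowledge // card_sources_n //; lia.
split; first exact: card_n.
split; first by rewrite card_n.
move=> k; rewrite card_knowledge // leqNgt; apply: contraLR; rewrite -!ltnNge.
exact: (card_sources_gt hE).
Qed.
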